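(* Let $\mu\ge0$ be an integer and let $\gamma\ge0$, $m\ge\gamma$ and $0\le\lambda\le\gamma$ be integers. Then the function $$\mathsf{M}^{(\mu)}_m(\lambda)=\frac{1}{2\pi^{3/2}}\frac{(4\lambda+4\mu+1)\Gamma(\lambda+\frac12)\Gamma(2\mu+\frac12)\Gamma(\lambda+\mu+\frac12)}{\Gamma(\lambda+\mu+1)\Gamma(\lambda+2\mu+1)}\cdot\frac{(2\mu+2m+1)\Gamma(m-\lambda+\frac12)\Gamma(m+\lambda+2\mu+1)}{\Gamma(m-\lambda+1)\Gamma(m+\lambda+2\mu+\frac32)}$$ is decreasing with respect to $m$. *)

From Stdlib Require Import Reals.
From Coquelicot Require Import Coquelicot.
Open Scope R_scope.

Definition Gamma (x : R) : R :=
  RInt_gen (fun t => Rpower t (x - 1) * exp (- t)) (at_right 0) (Rbar_locally p_infty).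

Definition Mfun (mu m lam : nat) : R :=
  let mu' := INR mu in let m' := INR m in let l := INR lam in
  / (2 * Rpower PI (3/2)) *
  ((4 * l + 4 * mu' + 1) * Gamma (l + 1/2) * Gamma (2 * mu' + 1/2)
     * Gamma (l + mu' + 1/2)
   / (Gamma (l + mu' + 1) * Gamma (l + 2 * mu' + 1)))
  * ((2 * mu' + 2 * m' + 1) * Gamma (m' - l + 1/2) * Gamma (m' + l + 2 * mu' + 1)
     / (Gamma (m' - l + 1) * Gamma (m' + l + 2 * mu' + 3/2))).

From Stdlib Require Import Reals Lra Lia Psatz Classical.
From Coquelicot Require Import Coquelicot.
Open Scope R_scope.

(* Write a = m - lam and b = m + lam + 2 mu.  The m-dependent factor of M is
   (a + b + 1) Gamma(a + 1/2) Gamma(b + 1) / (Gamma(a + 1) Gamma(b + 3/2)), and by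
   Gamma(x + 1) = x Gamma(x) the step m -> m + 1 multiplies it by
   (a + b + 3)(a + 1/2)(b + 1) / ((a + b + 1)(a + 1)(b + 3/2)).  This ratio is at most 1:
   denominator minus numerator equals (b - a)(b - a + 1)/2, and b - a = 2 lam + 2 mu >= 0.
   Positivity and the recursion of Gamma come from its integral, which converges by
   comparison with t^(x-1) on (0, 1] and with e^(-t/2) on [1, oo); the recursion is an
   integration by parts against t^x e^(-t), which vanishes at both ends. *)

Lemma exp_le_compat (a b : R) : a <= b -> exp a <= exp b.
Proof.
  intros [Hlt | ->]; [now apply Rlt_le, exp_increasing | apply Rle_refl].
Qed.

Lemma ln_le_2_sqrt_sub_1 (t : R) : 0 < t -> ln t <= 2 * (sqrt t - 1).
Proof.
  intros Ht. assert (Hs : 0 < sqrt t) by (apply sqrt_lt_R0; lra).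
  assert (Hln : ln t = 2 * ln (sqrt t)).
  { rewrite <- (sqrt_sqrt t) at 1 by lra. rewrite ln_mult by lra. ring. }
  pose proof (exp_ineq1_le (ln (sqrt t))) as Hexp.
  rewrite exp_ln in Hexp by lra. lra.
Qed.

Lemma mul_ln_le (y t : R) : 1 <= t -> y * ln t <= 2 * y ^ 2 + t / 2.
Proof.
  intros Ht. pose proof (ln_le_2_sqrt_sub_1 t ltac:(lra)) as Hln.
  assert (Hln0 : 0 <= ln t) by (rewrite <- ln_1; apply ln_le; lra).
  assert (Hs : sqrt t * sqrt t = t) by (apply sqrt_sqrt; lra).
  assert (0 <= sqrt t) by apply sqrt_pos.
  destruct (Rle_lt_dec 0 y) as [Hy | Hy].
  - assert (y * ln t <= y * (2 * (sqrt t - 1))) by (apply Rmult_le_compat_l; lra).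
    assert (0 <= (y - sqrt t / 2) ^ 2) by apply pow2_ge_0.
    nra.
  - assert (y * ln t <= 0) by nra. nra.
Qed.

Lemma Rpower_mul_exp_opp_le (y t : R) : 1 <= t ->
  Rpower t y * exp (- t) <= exp (2 * y ^ 2) * exp (- t / 2).
Proof.
  intros Ht. unfold Rpower. rewrite <- !exp_plus. apply exp_le_compat.
  pose proof (mul_ln_le y t Ht). lra.
Qed.

Lemma is_derive_Rpower (x t : R) : 0 < t ->
  is_derive (fun t => Rpower t x) t (x * Rpower t (x - 1)).
Proof.
  intros Ht. unfold Rpower. auto_derive; [lra |].
  replace ((x - 1) * ln t) with (x * ln t + - ln t) by ring.
  rewrite exp_plus, exp_Ropp, exp_ln by lra. field. lra.
Qed.

Lemma Rpower_at_right_0 (x : R) : 0 < x ->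
  filterlim (fun t => Rpower t x) (at_right 0) (locally 0).
Proof.
  intros Hx.
  apply (filterlim_comp _ _ _ ln (fun y => exp (x * y)) _ (Rbar_locally m_infty));
    [exact is_lim_ln_0 |].
  apply (filterlim_comp _ _ _ (Rmult x) exp _ (Rbar_locally m_infty));
    [| exact is_lim_exp_m].
  rewrite <- (is_Rbar_mult_unique x m_infty m_infty) at 2.
  - apply filterlim_Rbar_mult_l.
  - apply is_Rbar_mult_sym, is_Rbar_mult_m_infty_pos. exact Hx.
Qed.

Lemma Rpower_mul_exp_opp_at_right_0 (x : R) : 0 < x ->
  filterlim (fun t => Rpower t x * exp (- t)) (at_right 0) (locally 0).
Proof.
  intros Hx.
  apply (filterlim_le_le (fun _ => 0) _ (fun t => Rpower t x) (Finite 0));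
    [| apply filterlim_const | apply Rpower_at_right_0, Hx].
  exists (mkposreal 1 Rlt_0_1). intros t _ Ht.
  assert (0 < Rpower t x) by apply exp_pos.
  assert (exp (- t) <= 1) by (rewrite <- exp_0; apply exp_le_compat; lra).
  split; [apply Rlt_le, Rmult_lt_0_compat; [easy | apply exp_pos] | nra].
Qed.

Lemma Rpower_mul_exp_opp_at_p_infty (x : R) :
  filterlim (fun t => Rpower t x * exp (- t)) (Rbar_locally p_infty) (locally 0).
Proof.
  set (K := exp (2 * x ^ 2)).
  assert (Hdom : filterlim (fun t => K * exp (- t / 2)) (Rbar_locally p_infty) (locally 0)).
  { rewrite <- (Rmult_0_r K).
    apply (is_lim_scal_l (fun t => exp (- t / 2)) K p_infty 0).
    apply (filterlim_ext (fun t => exp (t * (- / 2)))); [intros t; f_equal; field |].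
    apply (filterlim_comp _ _ _ (fun t => t * (- / 2)) exp _ (Rbar_locally m_infty));
      [| exact is_lim_exp_m].
    rewrite <- (is_Rbar_mult_unique p_infty (- / 2) m_infty).
    - apply filterlim_Rbar_mult_r.
    - apply is_Rbar_mult_p_infty_neg. simpl. lra. }
  apply (filterlim_le_le (fun _ => 0) _ (fun t => K * exp (- t / 2)) (Finite 0));
    [| apply filterlim_const | exact Hdom].
  exists 1. intros t Ht. split.
  - apply Rlt_le, Rmult_lt_0_compat; apply exp_pos.
  - apply Rpower_mul_exp_opp_le. lra.
Qed.

Lemma bounded_sup_approx (P : R -> Prop) (G : R -> R) (C x0 : R) :
  P x0 -> (forall x, P x -> G x <= C) ->
  exists L, (forall x, P x -> G x <= L) /\
            (forall eps, 0 < eps -> exists x, P x /\ L - eps < G x).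
Proof.
  intros Hx0 HC.
  destruct (completeness (fun y => exists x, P x /\ y = G x)) as [L [Hub Hlub]].
  - exists C. intros y [x [Hx ->]]. auto.
  - exists (G x0), x0. auto.
  - exists L. split.
    + intros x Hx. apply Hub. eauto.
    + intros eps Heps. apply NNPP. intros Hno.
      assert (L <= L - eps); [|lra].
      apply Hlub. intros y [x [Hx ->]].
      apply Rnot_lt_le. intros Hlt. apply Hno. eauto.
Qed.

Section NonnegativeImproperIntegrals.

Variable f : R -> R.

Lemma is_RInt_gen_at_point_p_infty_nonneg (c C : R) :
  (forall t, c <= t -> 0 <= f t) -> (forall t, c <= t -> continuous f t) ->
  (forall b, c <= b -> RInt f c b <= C) ->
  exists L, is_RInt_gen f (at_point c) (Rbar_locally p_infty) L /\
            (forall b, c <= b -> RInt f c b <= L).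
Proof.
  intros Hpos Hcont HC.
  assert (Hex : forall a b, c <= a <= b -> ex_RInt f a b).
  { intros a b Hab. apply (@ex_RInt_continuous R_CompleteNormedModule). intros z Hz.
    rewrite Rmin_left, Rmax_right in Hz by lra. apply Hcont. lra. }
  destruct (bounded_sup_approx (fun b => c <= b) (RInt f c) C c)
    as [L [HL Happrox]]; [lra | exact HC |].
  exists L. split; [| exact HL].
  intros P [eps HP].
  destruct (Happrox eps (cond_pos eps)) as [b0 [Hb0 Hlt]].
  apply (Filter_prod _ _ _ (fun a => a = c) (fun b => b0 < b));
    [reflexivity | now exists b0 |].
  intros a b -> Hb. exists (RInt f c b). split.
  - apply (@RInt_correct R_CompleteNormedModule), Hex. lra.
  - apply HP. change (Rabs (RInt f c b - L) < eps).
    assert (Hsplit : RInt f c b0 + RInt f b0 b = RInt f c b)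
      by (apply (@RInt_Chasles R_CompleteNormedModule); apply Hex; lra).
    assert (0 <= RInt f b0 b).
    { apply RInt_ge_0; [lra | apply Hex; lra | intros; apply Hpos; lra]. }
    assert (RInt f c b <= L) by (apply HL; lra).
    apply Rabs_def1; lra.
Qed.

Lemma is_RInt_gen_at_right_0_at_point_nonneg (c C : R) : 0 < c ->
  (forall t, 0 < t <= c -> 0 <= f t) -> (forall t, 0 < t <= c -> continuous f t) ->
  (forall a, 0 < a <= c -> RInt f a c <= C) ->
  exists L, is_RInt_gen f (at_right 0) (at_point c) L /\
            (forall a, 0 < a <= c -> RInt f a c <= L).
Proof.
  intros Hc Hpos Hcont HC.
  assert (Hex : forall a b, 0 < a <= b -> b <= c -> ex_RInt f a b).
  { intros a b Hab Hbc. apply (@ex_RInt_continuous R_CompleteNormedModule). intros z Hz.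
    rewrite Rmin_left, Rmax_right in Hz by lra. apply Hcont. lra. }
  destruct (bounded_sup_approx (fun a => 0 < a <= c) (fun a => RInt f a c) C c)
    as [L [HL Happrox]]; [lra | exact HC |].
  exists L. split; [| exact HL].
  intros P [eps HP].
  destruct (Happrox eps (cond_pos eps)) as [a0 [Ha0 Hlt]].
  apply (Filter_prod _ _ _ (fun a => 0 < a <= a0) (fun b => b = c)); [| reflexivity |].
  { assert (Ha0pos : 0 < a0) by lra.
    exists (mkposreal a0 Ha0pos). intros a Ha Hapos.
    change (Rabs (a - 0) < a0) in Ha. rewrite Rminus_0_r in Ha.
    apply Rabs_def2 in Ha. lra. }
  intros a b Ha ->. exists (RInt f a c). split.
  - apply (@RInt_correct R_CompleteNormedModule), Hex; lra.
  - apply HP. change (Rabs (RInt f a c - L) < eps).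
    assert (Hsplit : RInt f a a0 + RInt f a0 c = RInt f a c)
      by (apply (@RInt_Chasles R_CompleteNormedModule); apply Hex; lra).
    assert (0 <= RInt f a a0).
    { apply RInt_ge_0; [lra | apply Hex; lra | intros; apply Hpos; lra]. }
    assert (RInt f a c <= L) by (apply HL; lra).
    apply Rabs_def1; lra.
Qed.

End NonnegativeImproperIntegrals.

Lemma at_right_0_p_infty_pos :
  filter_prod (at_right 0) (Rbar_locally p_infty)
    (fun ab => forall z, Rmin (fst ab) (snd ab) <= z -> 0 < z).
Proof.
  apply (Filter_prod _ _ _ (fun a => 0 < a) (fun b => 0 < b)).
  - exists (mkposreal 1 Rlt_0_1). intros; assumption.
  - exists 0. intros; assumption.
  - intros a b Ha Hb z Hz. simpl in Hz. pose proof (Rmin_glb_lt a b 0 Ha Hb). lra.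
Qed.

Definition gamma_integrand (x t : R) : R := Rpower t (x - 1) * exp (- t).

Lemma gamma_integrand_pos (x t : R) : 0 < gamma_integrand x t.
Proof. apply Rmult_lt_0_compat; apply exp_pos. Qed.

Lemma continuous_gamma_integrand (x t : R) : 0 < t -> continuous (gamma_integrand x) t.
Proof.
  intros Ht. apply (@ex_derive_continuous R_AbsRing R_NormedModule).
  unfold gamma_integrand, Rpower. auto_derive. lra.
Qed.

Lemma ex_RInt_gamma_integrand (x a b : R) : 0 < a <= b -> ex_RInt (gamma_integrand x) a b.
Proof.
  intros Hab. apply (@ex_RInt_continuous R_CompleteNormedModule). intros z Hz.
  rewrite Rmin_left in Hz by lra. apply continuous_gamma_integrand. lra.
Qed.

Lemma RInt_gamma_integrand_0_1_le (x a : R) : 0 < x -> 0 < a <= 1 ->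
  RInt (gamma_integrand x) a 1 <= / x.
Proof.
  intros Hx Ha.
  assert (Hprim : is_RInt (fun t => Rpower t (x - 1)) a 1
                    (minus (Rpower 1 x / x) (Rpower a x / x))).
  { apply (@is_RInt_derive R_CompleteNormedModule (fun t => Rpower t x / x)).
    - intros t Ht. rewrite Rmin_left in Ht by lra.
      apply (is_derive_ext (fun t => / x * Rpower t x)); [intros; apply Rmult_comm |].
      replace (Rpower t (x - 1)) with (/ x * (x * Rpower t (x - 1))) by (field; lra).
      apply is_derive_scal, is_derive_Rpower. lra.
    - intros t Ht. rewrite Rmin_left in Ht by lra.
      apply (@ex_derive_continuous R_AbsRing R_NormedModule).
      eexists. apply is_derive_Rpower. lra. }
  apply Rle_trans with (RInt (fun t => Rpower t (x - 1)) a 1).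
  - apply RInt_le; [lra | apply ex_RInt_gamma_integrand; lra | eexists; exact Hprim |].
    intros t Ht. unfold gamma_integrand.
    rewrite <- (Rmult_1_r (Rpower t (x - 1))) at 2.
    apply Rmult_le_compat_l; [apply Rlt_le, exp_pos |].
    rewrite <- exp_0. apply exp_le_compat. lra.
  - rewrite (is_RInt_unique _ _ _ _ Hprim). unfold minus, plus, opp; simpl.
    assert (Hone : Rpower 1 x = 1) by (unfold Rpower; rewrite ln_1, Rmult_0_r; apply exp_0).
    assert (0 < Rpower a x) by apply exp_pos.
    assert (0 < / x) by (apply Rinv_0_lt_compat; lra).
    rewrite Hone. unfold Rdiv. nra.
Qed.

Lemma RInt_gamma_integrand_1_le (x b : R) : 1 <= b ->
  RInt (gamma_integrand x) 1 b <= 2 * exp (2 * (x - 1) ^ 2).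
Proof.
  intros Hb. set (K := exp (2 * (x - 1) ^ 2)).
  assert (HK : 0 < K) by apply exp_pos.
  assert (Hprim : is_RInt (fun t => K * exp (- t / 2)) 1 b
                    (minus (- 2 * K * exp (- b / 2)) (- 2 * K * exp (- 1 / 2)))).
  { apply (@is_RInt_derive R_CompleteNormedModule (fun t => - 2 * K * exp (- t / 2))).
    - intros t _. auto_derive; [easy |].
      replace (- t * / 2) with (- t / 2) by field. field.
    - intros t _. apply (@ex_derive_continuous R_AbsRing R_NormedModule). auto_derive. easy. }
  apply Rle_trans with (RInt (fun t => K * exp (- t / 2)) 1 b).
  - apply RInt_le; [lra | apply ex_RInt_gamma_integrand; lra | eexists; exact Hprim |].
    intros t Ht. apply Rpower_mul_exp_opp_le. lra.
  - rewrite (is_RInt_unique _ _ _ _ Hprim). unfold minus, plus, opp; simpl.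
    assert (0 < exp (- b / 2)) by apply exp_pos.
    assert (exp (- 1 / 2) <= 1) by (rewrite <- exp_0; apply exp_le_compat; lra).
    nra.
Qed.

Lemma is_RInt_gen_Gamma_pos (x : R) : 0 < x ->
  is_RInt_gen (gamma_integrand x) (at_right 0) (Rbar_locally p_infty) (Gamma x) /\
  0 < Gamma x.
Proof.
  intros Hx.
  destruct (is_RInt_gen_at_right_0_at_point_nonneg (gamma_integrand x) 1 (/ x))
    as [L1 [H1 B1]]; [lra | intros; apply Rlt_le, gamma_integrand_pos
                     | intros; apply continuous_gamma_integrand; lra
                     | intros; apply RInt_gamma_integrand_0_1_le; auto |].
  destruct (is_RInt_gen_at_point_p_infty_nonneg (gamma_integrand x) 1
              (2 * exp (2 * (x - 1) ^ 2)))
    as [L2 [H2 B2]]; [intros; apply Rlt_le, gamma_integrand_pos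
                     | intros; apply continuous_gamma_integrand; lra
                     | intros; apply RInt_gamma_integrand_1_le; auto |].
  pose proof (is_RInt_gen_Chasles _ 1 L1 L2 H1 H2) as H.
  replace (Gamma x) with (L1 + L2) by exact (eq_sym (is_RInt_gen_unique _ _ H)).
  split; [exact H |].
  assert (0 <= L1).
  { apply Rle_trans with (RInt (gamma_integrand x) 1 1);
      [rewrite RInt_point; apply Rle_refl | apply B1; lra]. }
  assert (0 < RInt (gamma_integrand x) 1 2).
  { apply Rle_lt_trans with (RInt (fun _ => 0) 1 2).
    - rewrite RInt_const. unfold scal; simpl; unfold mult; simpl. lra.
    - apply RInt_lt; [lra | intros; apply continuous_gamma_integrand; lra
                     | intros; apply continuous_const | intros; apply gamma_integrand_pos]. }
  specialize (B2 2 ltac:(lra)). lra.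
Qed.

Lemma Gamma_pos (x : R) : 0 < x -> 0 < Gamma x.
Proof. intros Hx. apply (is_RInt_gen_Gamma_pos x Hx). Qed.

Lemma is_derive_Rpower_mul_exp_opp (x t : R) : 0 < t ->
  is_derive (fun t => Rpower t x * exp (- t)) t
            (x * gamma_integrand x t - gamma_integrand (x + 1) t).
Proof.
  intros Ht. unfold gamma_integrand. replace (x + 1 - 1) with x by ring.
  replace (x * (Rpower t (x - 1) * exp (- t)) - Rpower t x * exp (- t))
    with (x * Rpower t (x - 1) * exp (- t) + Rpower t x * (- exp (- t))) by ring.
  apply (is_derive_mult (fun t => Rpower t x) (fun t => exp (- t))).
  - apply is_derive_Rpower. exact Ht.
  - auto_derive; [easy | ring].
  - intros; apply Rmult_comm.
Qed.

Lemma Gamma_succ (x : R) : 0 < x -> Gamma (x + 1) = x * Gamma x.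
Proof.
  intros Hx. destruct (is_RInt_gen_Gamma_pos x Hx) as [HGamma _].
  set (G := fun t => Rpower t x * exp (- t)).
  set (dG := fun t => x * gamma_integrand x t - gamma_integrand (x + 1) t).
  assert (HD : forall t, 0 < t -> Derive G t = dG t).
  { intros t Ht. apply is_derive_unique, is_derive_Rpower_mul_exp_opp, Ht. }
  assert (Hparts : is_RInt_gen (Derive G) (at_right 0) (Rbar_locally p_infty) (0 - 0)).
  { apply is_RInt_gen_Derive.
    - eapply filter_imp; [| exact at_right_0_p_infty_pos]. intros [a b] Hab z Hz.
      eexists. apply is_derive_Rpower_mul_exp_opp, (Hab z), Hz.
    - eapply filter_imp; [| exact at_right_0_p_infty_pos]. intros [a b] Hab z Hz.
      assert (Hz0 : 0 < z) by apply (Hab z), Hz.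
      apply (continuous_ext_loc _ dG).
      + eapply filter_imp; [| apply (open_gt 0 z Hz0)].
        intros u Hu. symmetry. apply HD, Hu.
      + apply (@ex_derive_continuous R_AbsRing R_NormedModule).
        unfold dG, gamma_integrand, Rpower. auto_derive. lra.
    - apply Rpower_mul_exp_opp_at_right_0, Hx.
    - apply Rpower_mul_exp_opp_at_p_infty. }
  assert (Hsucc : is_RInt_gen (gamma_integrand (x + 1)) (at_right 0) (Rbar_locally p_infty)
                    (x * Gamma x - (0 - 0))).
  { eapply is_RInt_gen_ext;
      [| apply (is_RInt_gen_minus (V := R_NormedModule));
         [apply (is_RInt_gen_scal (V := R_NormedModule)), HGamma | exact Hparts]].
    eapply filter_imp; [| exact at_right_0_p_infty_pos]. intros [a b] Hab z Hz.
    assert (Hz0 : 0 < z) by (apply (Hab z), Rlt_le, Hz).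
    rewrite HD by exact Hz0. unfold dG, minus, plus, opp, scal; simpl; unfold mult; simpl.
    ring. }
  replace (x * Gamma x) with (x * Gamma x - (0 - 0)) by ring.
  exact (is_RInt_gen_unique _ _ Hsucc).
Qed.

Definition Mconst (mu lam : nat) : R :=
  let mu' := INR mu in let l := INR lam in
  / (2 * Rpower PI (3/2)) *
  ((4 * l + 4 * mu' + 1) * Gamma (l + 1/2) * Gamma (2 * mu' + 1/2)
     * Gamma (l + mu' + 1/2)
   / (Gamma (l + mu' + 1) * Gamma (l + 2 * mu' + 1))).

Definition Mfactor (a b : R) : R :=
  (a + b + 1) * Gamma (a + 1/2) * Gamma (b + 1) / (Gamma (a + 1) * Gamma (b + 3/2)).

Lemma Mfun_split (mu m lam : nat) :
  Mfun mu m lam = Mconst mu lam * Mfactor (INR m - INR lam) (INR m + INR lam + 2 * INR mu).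
Proof.
  unfold Mfun, Mconst, Mfactor. cbv zeta.
  replace (INR m - INR lam + (INR m + INR lam + 2 * INR mu) + 1)
    with (2 * INR mu + 2 * INR m + 1) by ring.
  reflexivity.
Qed.

Lemma Mconst_pos (mu lam : nat) : 0 < Mconst mu lam.
Proof.
  unfold Mconst. cbv zeta.
  pose proof (pos_INR mu). pose proof (pos_INR lam).
  assert (0 < Rpower PI (3/2)) by apply exp_pos.
  assert (0 < Gamma (INR lam + 1/2)) by (apply Gamma_pos; lra).
  assert (0 < Gamma (2 * INR mu + 1/2)) by (apply Gamma_pos; lra).
  assert (0 < Gamma (INR lam + INR mu + 1/2)) by (apply Gamma_pos; lra).
  assert (0 < Gamma (INR lam + INR mu + 1)) by (apply Gamma_pos; lra).
  assert (0 < Gamma (INR lam + 2 * INR mu + 1)) by (apply Gamma_pos; lra).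
  apply Rmult_lt_0_compat; [apply Rinv_0_lt_compat; lra |].
  apply Rdiv_lt_0_compat; [| nra].
  repeat apply Rmult_lt_0_compat; lra.
Qed.

Lemma Mfactor_pos (a b : R) : 0 <= a -> 0 <= b -> 0 < Mfactor a b.
Proof.
  intros Ha Hb. unfold Mfactor.
  assert (0 < Gamma (a + 1/2)) by (apply Gamma_pos; lra).
  assert (0 < Gamma (b + 1)) by (apply Gamma_pos; lra).
  assert (0 < Gamma (a + 1)) by (apply Gamma_pos; lra).
  assert (0 < Gamma (b + 3/2)) by (apply Gamma_pos; lra).
  apply Rdiv_lt_0_compat; [| nra].
  repeat apply Rmult_lt_0_compat; lra.
Qed.

Lemma Mfactor_succ (a b : R) : 0 <= a -> 0 <= b ->
  Mfactor (a + 1) (b + 1) =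
  (a + b + 3) * (a + 1/2) * (b + 1) / ((a + b + 1) * (a + 1) * (b + 3/2)) * Mfactor a b.
Proof.
  intros Ha Hb. unfold Mfactor.
  replace (a + 1 + 1/2) with ((a + 1/2) + 1) by ring.
  replace (b + 1 + 3/2) with ((b + 3/2) + 1) by ring.
  rewrite (Gamma_succ (a + 1/2)), (Gamma_succ (b + 1)), (Gamma_succ (a + 1)),
    (Gamma_succ (b + 3/2)) by lra.
  assert (0 < Gamma (a + 1)) by (apply Gamma_pos; lra).
  assert (0 < Gamma (b + 3/2)) by (apply Gamma_pos; lra).
  field. repeat split; lra.
Qed.

Lemma Mfactor_ratio_le (a b : R) : 0 <= a <= b ->
  (a + b + 3) * (a + 1/2) * (b + 1) <= (a + b + 1) * (a + 1) * (b + 3/2).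
Proof.
  intros Hab.
  assert (Hgap : (a + b + 1) * (a + 1) * (b + 3/2) - (a + b + 3) * (a + 1/2) * (b + 1)
                 = (b - a) * (b - a + 1) / 2) by field.
  assert (0 <= (b - a) * (b - a + 1)) by (apply Rmult_le_pos; lra).
  lra.
Qed.

Lemma Mfactor_succ_le (a b : R) : 0 <= a <= b -> Mfactor (a + 1) (b + 1) <= Mfactor a b.
Proof.
  intros Hab. rewrite Mfactor_succ by lra.
  rewrite <- (Rmult_1_l (Mfactor a b)) at 2.
  apply Rmult_le_compat_r; [apply Rlt_le, Mfactor_pos; lra |].
  apply Rle_div_l; [repeat apply Rmult_lt_0_compat; lra |].
  rewrite Rmult_1_l. apply Mfactor_ratio_le, Hab.
Qed.

Lemma Mfun_succ_le (mu m lam : nat) : (lam <= m)%nat -> Mfun mu (S m) lam <= Mfun mu m lam.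
Proof.
  intros Hle. rewrite !Mfun_split, S_INR.
  apply le_INR in Hle. pose proof (pos_INR lam). pose proof (pos_INR mu).
  apply Rmult_le_compat_l; [apply Rlt_le, Mconst_pos |].
  replace (INR m + 1 - INR lam) with (INR m - INR lam + 1) by ring.
  replace (INR m + 1 + INR lam + 2 * INR mu) with (INR m + INR lam + 2 * INR mu + 1) by ring.
  apply Mfactor_succ_le. lra.
Qed.

Theorem lemma5p5 (mu gamma lam : nat) (Hlam : (lam <= gamma)%nat) :
  forall m1 m2 : nat, (gamma <= m1)%nat -> (m1 <= m2)%nat ->
    Mfun mu m2 lam <= Mfun mu m1 lam.
Proof.
  intros m1 m2 Hgamma Hle. induction Hle as [| m Hle IH].
  - apply Rle_refl.
  - apply Rle_trans with (Mfun mu m lam); [apply Mfun_succ_le; lia | exact IH].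
Qed.
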